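(* Let $f:\{0,1\}^n\to\{0,1\}^m$ be a Boolean function which is either constant or balanced. For each $i=0,\dots,m-1$ run $\mathrm{GPK}(\mathbf{e}_i)$ with output $\delta_i\in\{0,1\}^n$, and define $\boldsymbol\lambda=\lambda_{m-1}\dots\lambda_0\in\{0,1\}^m$ by $\lambda_i=0$ if $\delta_i=\mathbf{0}$ and $\lambda_i=1$ otherwise. Then with certainty: if $f$ is constant, $\boldsymbol\lambda=\mathbf{0}$; if $f$ is balanced with its two values $\mathbf{f}_1\neq\mathbf{f}_2$, then $\boldsymbol\lambda=\mathbf{f}_1\oplus\mathbf{f}_2$. In particular, the set of values of $f$ equals $\{f(\mathbf{0}),\,f(\mathbf{0})\oplus\boldsymbol\lambda\}$, so the possible values of $f$ are determined by these runs together with one classical evaluation of $f(\mathbf{0})$.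
   Context: A function $f:\{0,1\}^n\to\{0,1\}^m$ is constant if $f(\mathbf{x})$ is the same for all $\mathbf{x}$, and balanced if it takes exactly two distinct values, each on exactly half of the inputs. Bits are indexed from the right starting at $0$ and $\mathbf{e}_i=0^{m-1-i}\,1\,0^{i}\in\{0,1\}^m$. For strings $\mathbf{y},\mathbf{z}$ of equal length, $\mathbf{y}\oplus\mathbf{z}$ is bitwise XOR and $\mathbf{y}\cdot\mathbf{z}=\bigoplus_j y_jz_j$. $\mathbf{U}_f$ is the unitary with $\mathbf{U}_f(\ket{\mathbf{x}}_n\otimes\ket{\mathbf{z}}_m)=\ket{\mathbf{x}}_n\otimes\ket{\mathbf{z}\oplus f(\mathbf{x})}_m$; $\mathbf{H}_k=\mathbf{H}^{\otimes k}$ with $\mathbf{H}$ the one-qubit Hadamard gate. The algorithm $\mathrm{GPK}(\mathbf{y})$ for $\mathbf{y}\in\{0,1\}^m$: start in $\ket{\mathbf{0}}_n\otimes\ket{\mathbf{0}}_m$; apply Pauli $\mathbf{X}$ gates to get $\ket{\mathbf{0}}_n\otimes\ket{\mathbf{y}}_m$; apply $\mathbf{H}_{n+m}$; apply $\mathbf{U}_f$; apply $\mathbf{H}_n$ to the first register; measure the first register in the computational basis, giving the output in $\{0,1\}^n$. *)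

From HB Require Import structures.
From mathcomp Require Import all_boot all_order all_algebra.
From mathcomp Require Import algC.
Set Implicit Arguments. Unset Strict Implicit. Unset Printing Implicit Defensive.
Import Order.TTheory GRing.Theory Num.Theory.
Local Open Scope ring_scope.

(* bit strings of length k; bit i is the entry at index i (indexed from the right) *)
Definition B (k : nat) := {ffun 'I_k -> bool}.

Definition bxor k (a b : B k) : B k := [ffun i => a i (+) b i].
Definition bzero k : B k := [ffun => false].
Definition ebit m (i : 'I_m) : B m := [ffun j => j == i].

Definition is_constant n m (f : B n -> B m) : Prop := forall x y, f x = f y.
Definition balanced_with n m (f : B n -> B m) (f1 f2 : B m) : Prop :=
  [/\ f1 != f2, (forall x, f x = f1 \/ f x = f2),
      (2 * #|[set x | f x == f1]| = 2 ^ n)%N & (2 * #|[set x | f x == f2]| = 2 ^ n)%N].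
Definition balanced n m (f : B n -> B m) : Prop := exists f1 f2, balanced_with f f1 f2.

(* register of n+m qubits: basis states |x>_n (x) |z>_m *)
Definition Reg n m := (B n * B m)%type.
Definition op n m := Reg n m -> Reg n m -> algC.  (* matrix entries <s|M|t> *)

Definition apply n m (M : op n m) (psi : Reg n m -> algC) : Reg n m -> algC :=
  fun s => \sum_(t : Reg n m) M s t * psi t.
Definition ket n m (s : Reg n m) : Reg n m -> algC := fun t => (t == s)%:R.

Definition had (a b : bool) : algC := (if a && b then -1 else 1) / sqrtC 2%:R.
Definition Hk k (a b : B k) : algC := \prod_(j < k) had (a j) (b j).

Definition Xop n m (y : B m) : op n m :=
  fun s t => ((s.1 == t.1) && (s.2 == bxor t.2 y))%:R.
Definition Hall n m : op n m := fun s t => Hk s.1 t.1 * Hk s.2 t.2.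
Definition Uf n m (f : B n -> B m) : op n m :=
  fun s t => ((s.1 == t.1) && (s.2 == bxor t.2 (f t.1)))%:R.
Definition Hfirst n m : op n m := fun s t => Hk s.1 t.1 * (s.2 == t.2)%:R.

Definition gpk_state n m (f : B n -> B m) (y : B m) : Reg n m -> algC :=
  apply (@Hfirst n m) (apply (Uf f) (apply (@Hall n m)
    (apply (@Xop n m y) (ket ((bzero n, bzero m) : Reg n m))))).

Definition gpk_prob n m (f : B n -> B m) (y : B m) (d : B n) : algC :=
  \sum_(z : B m) `|gpk_state f y (d, z)| ^+ 2.

Definition lam n m (d : {ffun 'I_m -> B n}) : B m := [ffun i => d i != bzero n].

Definition runs_prob n m (f : B n -> B m) (P : pred {ffun 'I_m -> B n}) : algC :=
  \sum_(d : {ffun 'I_m -> B n} | P d) \prod_(i < m) gpk_prob f (ebit i) (d i).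

From HB Require Import structures.
From mathcomp Require Import all_boot all_order all_algebra.
From mathcomp Require Import algC.
From mathcomp Require Import ring.

(* Up to a sign and normalisation, the amplitude of |d>|z> at the end of GPK(e_i) is
   the Walsh coefficient sum_x (-1)^(d.x + f(x)_i) of bit i of f.  If that bit is
   constant the coefficient vanishes for every d <> 0, so GPK(e_i) surely returns 0;
   if the bit is balanced it vanishes at d = 0, so GPK(e_i) surely returns a nonzero
   string.  For f balanced with values f1, f2, bit i is constant exactly when
   f1_i = f2_i, hence lambda = f1 xor f2 (and lambda = 0 for constant f); the values
   {f1, f2} of f are then {f(0), f(0) xor lambda}. *)

Set Implicit Arguments. Unset Strict Implicit. Unset Printing Implicit Defensive.
Import Order.TTheory GRing.Theory Num.Theory.
Local Open Scope ring_scope.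

Lemma ffunPn (aT : finType) (rT : eqType) (f g : {ffun aT -> rT}) :
  f != g -> exists x, f x != g x.
Proof.
move=> neq_fg; apply/existsP; rewrite -negb_forall; apply: contra neq_fg.
by move=> /forallP eq_fg; apply/eqP/ffunP => x; apply/eqP.
Qed.

Section BitStrings.
Variable k : nat.
Implicit Types a b c : B k.

Lemma bxor0l a : bxor (bzero k) a = a.
Proof. by apply/ffunP => j; rewrite !ffunE. Qed.

Lemma bxor0r a : bxor a (bzero k) = a.
Proof. by apply/ffunP => j; rewrite !ffunE addbF. Qed.

Lemma bxorA a b c : bxor a (bxor b c) = bxor (bxor a b) c.
Proof. by apply/ffunP => j; rewrite !ffunE addbA. Qed.

Lemma bxorC a b : bxor a b = bxor b a.
Proof. by apply/ffunP => j; rewrite !ffunE addbC. Qed.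

Lemma bxorxx a : bxor a a = bzero k.
Proof. by apply/ffunP => j; rewrite !ffunE addbb. Qed.

Lemma bxorK a b : bxor (bxor a b) b = a.
Proof. by rewrite -bxorA bxorxx bxor0r. Qed.

Lemma bxorI c : injective (fun a => bxor a c).
Proof. by move=> a b eq_ab; rewrite -(bxorK a c) eq_ab bxorK. Qed.

End BitStrings.

Local Notation sqrt2 := (sqrtC (2%:R : algC)).

Lemma had_sign a b : had a b = (-1) ^+ (a && b) * sqrt2^-1.
Proof. by rewrite /had; case: (a && b). Qed.

Lemma hadC a b : had a b = had b a.
Proof. by rewrite /had andbC. Qed.

Lemma had_orthonormal b c : \sum_(a : bool) had a b * had a c = (b == c)%:R.
Proof.
have sqrt2_sqr : sqrt2^-1 * sqrt2^-1 = 2^-1 by rewrite -invfM -expr2 sqrtCK.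
rewrite big_bool /= !had_sign !mulr_signM sqrt2_sqr.
by case: b; case: c => /=; rewrite ?expr0 ?expr1 ?addNr //; field.
Qed.

Section Hadamard.
Variable k : nat.
Implicit Types a b c : B k.

Lemma HkC a b : Hk a b = Hk b a.
Proof. by apply: eq_bigr => j _; rewrite hadC. Qed.

Lemma Hk_orthonormal b c : \sum_a Hk a b * Hk a c = (b == c)%:R.
Proof.
under eq_bigr do rewrite -big_split /=.
rewrite -(bigA_distr_bigA (fun j (x : bool) => had x (b j) * had x (c j))) /=.
under eq_bigr do rewrite had_orthonormal.
have [<-|neq_bc] := eqVneq b c; first by rewrite big1 // => j _; rewrite eqxx.
have [j neq_j] := ffunPn neq_bc.
by rewrite (bigD1 j) //= (negbTE neq_j) mul0r.
Qed.

Lemma Hk0l b : Hk (bzero k) b = sqrt2^-1 ^+ k.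
Proof.
rewrite /Hk (eq_bigr (fun _ => sqrt2^-1)) ?prodr_const ?card_ord // => j _.
by rewrite had_sign ffunE mul1r.
Qed.

Lemma Hk_real a b : Hk a b \is Num.real.
Proof.
apply: rpred_prod => j _; rewrite had_sign rpredM ?rpred_sign //.
by rewrite realV sqrtC_real ?ler0n.
Qed.

Lemma Hk_ebit a (i : 'I_k) : Hk a (ebit i) = (-1) ^+ a i * sqrt2^-1 ^+ k.
Proof.
rewrite /Hk; under eq_bigr do rewrite had_sign ffunE.
rewrite big_split /= prodr_const card_ord (bigD1 i) //= eqxx andbT.
by rewrite big1 ?mulr1 // => j /negbTE ->; rewrite andbF.
Qed.

Lemma sum_Hk_eq0 a : a != bzero k -> \sum_x Hk a x = 0.
Proof.
move=> /negbTE nz_a; have := Hk_orthonormal a (bzero k).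
under eq_bigr do rewrite HkC [Hk _ (bzero k)]HkC Hk0l.
rewrite -mulr_suml nz_a => /eqP; rewrite mulf_eq0 expf_eq0 invr_eq0 sqrtC_eq0.
by rewrite pnatr_eq0 andbF orbF => /eqP.
Qed.

Lemma Hk_parseval (g : B k -> algC) :
  \sum_a (\sum_x Hk a x * g x) ^+ 2 = \sum_x g x ^+ 2.
Proof.
under eq_bigr do rewrite expr2 big_distrlr /=.
rewrite exchange_big /=; apply: eq_bigr => x _; rewrite exchange_big /=.
have cross y : \sum_a Hk a x * g x * (Hk a y * g y) = g x * g y * (x == y)%:R.
  by rewrite -Hk_orthonormal mulr_sumr; apply: eq_bigr => a _; ring.
under eq_bigr do rewrite cross.
rewrite (bigD1 x) //= eqxx mulr1 big1 ?addr0 ?expr2 // => y.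
by rewrite eq_sym => /negbTE ->; rewrite mulr0.
Qed.

End Hadamard.

Lemma sum_mul_delta (R : pzSemiRingType) (T : finType) (F : T -> R) s :
  \sum_t F t * (t == s)%:R = F s.
Proof. by under eq_bigr do rewrite mulr_natr mulrb; rewrite -big_mkcond big_pred1_eq. Qed.

Section Circuit.
Variables n m : nat.
Implicit Types (M : op n m) (psi phi : Reg n m -> algC) (s t : Reg n m).

Lemma apply_ket M s t : apply M (ket s) t = M t s.
Proof. exact: sum_mul_delta. Qed.

Lemma eq_apply M psi phi : psi =1 phi -> apply M psi =1 apply M phi.
Proof. by move=> eq_psi s; apply: eq_bigr => t _; rewrite eq_psi. Qed.

Lemma apply_Uf (g : B n -> B m) psi s :
  apply (Uf g) psi s = psi (s.1, bxor s.2 (g s.1)).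
Proof.
rewrite -[RHS](sum_mul_delta psi); apply: eq_bigr => -[x z] _.
rewrite mulrC /Uf xpair_eqE [x == _]eq_sym /=.
have [<-|_ //] := eqVneq s.1 x.
by rewrite /= -(inj_eq (@bxorI _ (g s.1))) bxorK eq_sym.
Qed.

Lemma apply_Hfirst psi d z :
  apply (@Hfirst n m) psi (d, z) = \sum_(x : B n) Hk d x * psi (x, z).
Proof.
rewrite /apply (eq_bigr (fun t => Hfirst (d, z) (t.1, t.2) * psi (t.1, t.2))) => [|[] //].
rewrite -(pair_bigA _ (fun x y => Hfirst (d, z) (x, y) * psi (x, y))) /=.
apply: eq_bigr => x _; rewrite -[RHS](sum_mul_delta (fun y => Hk d x * psi (x, y))).
by apply: eq_bigr => y _; rewrite /Hfirst /= mulrAC eq_sym.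
Qed.

End Circuit.

Section Values.
Variables (n m : nat) (f : B n -> B m).

Lemma const_image x0 : is_constant f -> [set f x | x : B n] = [set f x0].
Proof.
move=> fc; apply/setP => v; rewrite inE.
by apply/imsetP/eqP => [[x _ ->]|->]; [exact: fc | exists x0].
Qed.

Lemma balanced_withC f1 f2 : balanced_with f f1 f2 -> balanced_with f f2 f1.
Proof.
move=> [neq12 f12 c1 c2]; split=> // [|x]; first by rewrite eq_sym.
by case: (f12 x); [right | left].
Qed.

Lemma balanced_with_hit f1 f2 : balanced_with f f1 f2 -> exists x, f x = f1.
Proof.
move=> [_ _ c1 _]; have : (0 < 2 * #|[set x | f x == f1]|)%N by rewrite c1 expn_gt0.
by rewrite muln_gt0 card_gt0 => /set0Pn [x]; rewrite inE => /eqP; exists x.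
Qed.

Lemma balanced_with_image f1 f2 x0 : balanced_with f f1 f2 ->
  [set f x | x : B n] = [set f x0; bxor (f x0) (bxor f1 f2)].
Proof.
move=> fb; have [_ f12 _ _] := fb.
have -> : [set f x | x : B n] = [set f1; f2].
  apply/setP => v; rewrite !inE; apply/imsetP/orP => [[x _ ->]|[] /eqP ->].
  - by case: (f12 x) => ->; [left | right].
  - by have [x <-] := balanced_with_hit fb; exists x.
  - by have [x <-] := balanced_with_hit (balanced_withC fb); exists x.
case: (f12 x0) => ->; first by rewrite bxorA bxorxx bxor0l.
by rewrite [bxor f1 f2]bxorC bxorA bxorxx bxor0l setUC.
Qed.

Lemma balanced_with_sign_sum f1 f2 i : balanced_with f f1 f2 ->
  f1 i != f2 i -> \sum_(x : B n) (-1) ^+ f x i = 0 :> algC.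
Proof.
move=> [neq12 f12 c1 c2] neq12_i.
pose S g := [set x | f x == g].
have card12 : #|S f1| = #|S f2|.
  by apply/eqP; rewrite -(eqn_pmul2l (_ : 0 < 2)%N) // c1 c2.
have S2_compl : S f2 = ~: S f1.
  apply/setP => x; rewrite !inE.
  by case: (f12 x) => ->; rewrite eqxx ?(negbTE neq12) // eq_sym neq12.
rewrite (bigID (fun x => x \in S f1)) /=.
rewrite [X in _ + X](eq_bigl [in S f2]) => [|x]; last by rewrite S2_compl in_setC.
rewrite (eq_bigr (fun _ => (-1) ^+ f1 i : algC)) => [|x]; last by rewrite inE => /eqP ->.
rewrite [X in _ + X](eq_bigr (fun _ => (-1) ^+ f2 i : algC)) => [|x]; last first.
  by rewrite inE => /eqP ->.
have -> : f2 i = ~~ f1 i by move: neq12_i; case: (f1 i); case: (f2 i).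
by rewrite !sumr_const card12 signrN mulNrn addrN.
Qed.

End Values.

Section GPK.
Variables (n m : nat) (f : B n -> B m).

Lemma gpk_stateE y d z : gpk_state f y (d, z) =
  \sum_(x : B n) Hk d x * (Hk x (bzero n) * Hk (bxor z (f x)) y).
Proof.
have prepared t : apply (@Xop n m y) (ket (bzero n, bzero m)) t = ket (bzero n, y) t.
  by case: t => x w; rewrite apply_ket /Xop /ket bxor0l xpair_eqE.
rewrite /gpk_state apply_Hfirst; apply: eq_bigr => x _.
by rewrite apply_Uf (eq_apply _ prepared) apply_ket.
Qed.

Lemma gpk_state_ebit i d z : gpk_state f (ebit i) (d, z) =
  (-1) ^+ z i * sqrt2^-1 ^+ (n + m) * \sum_(x : B n) Hk d x * (-1) ^+ f x i.
Proof.
rewrite gpk_stateE mulr_sumr; apply: eq_bigr => x _.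
by rewrite [Hk x _]HkC Hk0l Hk_ebit ffunE signr_addb exprD; ring.
Qed.

Lemma gpk_prob_sum1 y : \sum_(d : B n) gpk_prob f y d = 1.
Proof.
have real_state d z : gpk_state f y (d, z) \is Num.real.
  by rewrite gpk_stateE rpred_sum // => x _; rewrite !rpredM ?Hk_real.
have Hk_norm k (b : B k) : \sum_(a : B k) Hk a b ^+ 2 = 1.
  by under eq_bigr do rewrite expr2; rewrite Hk_orthonormal eqxx.
rewrite exchange_big /=.
under eq_bigr => z _ do
  under eq_bigr => d _ do rewrite (real_normK (real_state d z)) gpk_stateE.
under eq_bigr => z _ do rewrite Hk_parseval.
rewrite exchange_big /= -[RHS](Hk_norm _ (bzero n)).
apply: eq_bigr => x _; under eq_bigr do rewrite exprMn.
have shifted : \sum_z Hk (bxor z (f x)) y ^+ 2 = 1.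
  by rewrite -(Hk_norm _ y) [RHS](reindex_inj (@bxorI _ (f x))).
by rewrite -mulr_sumr shifted mulr1.
Qed.

Lemma gpk_prob_eq0 y d : (forall z, gpk_state f y (d, z) = 0) -> gpk_prob f y d = 0.
Proof. by move=> vanish; apply: big1 => z _; rewrite vanish normr0 expr0n. Qed.

Lemma gpk_prob_ebit_eq0 i d :
  \sum_(x : B n) Hk d x * (-1) ^+ f x i = 0 -> gpk_prob f (ebit i) d = 0.
Proof.
by move=> walsh0; apply: gpk_prob_eq0 => z; rewrite gpk_state_ebit walsh0 mulr0.
Qed.

Lemma gpk_prob_bit_const i b d :
  (forall x, f x i = b) -> d != bzero n -> gpk_prob f (ebit i) d = 0.
Proof.
move=> fi_b nz_d; apply: gpk_prob_ebit_eq0.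
by under eq_bigr do rewrite fi_b; rewrite -mulr_suml sum_Hk_eq0 ?mul0r.
Qed.

Lemma gpk_prob_bit_balanced i :
  \sum_(x : B n) (-1) ^+ f x i = 0 :> algC -> gpk_prob f (ebit i) (bzero n) = 0.
Proof.
move=> balanced_i; apply: gpk_prob_ebit_eq0.
by under eq_bigr do rewrite Hk0l; rewrite -mulr_sumr balanced_i mulr0.
Qed.

End GPK.

Definition gpk_reports n m (f : B n -> B m) (L : B m) :=
  forall i d, gpk_prob f (ebit i) d != 0 -> (d != bzero n) = L i.

Lemma gpk_reports_const n m (f : B n -> B m) :
  is_constant f -> gpk_reports f (bzero m).
Proof.
move=> fc i d nz_prob; rewrite ffunE; apply: contraNF nz_prob => nz_d.
apply/eqP; apply: (gpk_prob_bit_const (b := f (bzero n) i)) nz_d => x.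
by rewrite (fc x (bzero n)).
Qed.

Lemma gpk_reports_balanced n m (f : B n -> B m) f1 f2 :
  balanced_with f f1 f2 -> gpk_reports f (bxor f1 f2).
Proof.
move=> fb i d nz_prob; rewrite ffunE; have [_ f12 _ _] := fb.
have [eq12_i|neq12_i] := eqVneq (f1 i) (f2 i).
  rewrite eq12_i addbb; apply: contraNF nz_prob => nz_d; apply/eqP.
  by apply: (gpk_prob_bit_const (b := f2 i)) nz_d => x; case: (f12 x) => ->.
rewrite (_ : _ (+) _ = true); last by move: neq12_i; case: (f1 i); case: (f2 i).
apply: contraNneq nz_prob => ->; apply/eqP.
exact: gpk_prob_bit_balanced (balanced_with_sign_sum fb neq12_i).
Qed.

Section Runs.
Variables (n m : nat) (f : B n -> B m).

Lemma runs_prob_total :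
  \sum_(d : {ffun 'I_m -> B n}) \prod_(i < m) gpk_prob f (ebit i) (d i) = 1.
Proof.
rewrite -(bigA_distr_bigA (fun i a => gpk_prob f (ebit i) a)) /=.
by apply: big1 => i _; apply: gpk_prob_sum1.
Qed.

Lemma runs_prob_lam L (P : pred {ffun 'I_m -> B n}) :
  gpk_reports f L -> (forall d, lam d = L -> P d) -> runs_prob f P = 1.
Proof.
move=> reports PL; rewrite -runs_prob_total (bigID P) /=.
rewrite [X in _ = _ + X]big1 ?addr0 // => d nPd.
have [i neq_i] := ffunPn (contraNneq (PL d) nPd).
rewrite (bigD1 i) //= (_ : gpk_prob _ _ _ = 0) ?mul0r //; apply/eqP.
by apply: contraNT neq_i => /reports; rewrite ffunE => ->.
Qed.

End Runs.

Theorem corollary3p5 (n m : nat) (f : B n -> B m) :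
  is_constant f \/ balanced f ->
  [/\ is_constant f -> runs_prob f (fun d => lam d == bzero m) = 1,
      (forall f1 f2 : B m, balanced_with f f1 f2 ->
         runs_prob f (fun d => lam d == bxor f1 f2) = 1)
    & runs_prob f (fun d =>
         [set f x | x : B n] == [set f (bzero n); bxor (f (bzero n)) (lam d)]) = 1].
Proof.
move=> const_or_bal; split.
- by move=> /gpk_reports_const reports; apply: runs_prob_lam reports _ => d ->.
- by move=> f1 f2 /gpk_reports_balanced reports; apply: runs_prob_lam reports _ => d ->.
case: const_or_bal => [fc | [f1 [f2 fb]]].
- apply: runs_prob_lam (gpk_reports_const fc) _ => d ->.
  by rewrite (const_image (bzero n) fc) bxor0r setUid.
- apply: runs_prob_lam (gpk_reports_balanced fb) _ => d ->.
  by rewrite (balanced_with_image (bzero n) fb).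
Qed.
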